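(* Assume the setting in the context. Let $\tilde M(i,i)$ be a simple $\tilde\Lambda$-module with $m_k\le i<m_{k+1}$ for some $1\le k\le r$. Then $\tilde M(i,i)$ is a cyclic simple module if and only if $i\equiv m_k\pmod{l_k}$ or $i\equiv m_k-1\pmod{l_k}$.
   Context: $\mathbf{k}$ a field, $n\ge2$. Setting: integers $0=m_1<\dots<m_{r+1}=m$, $l_k\ge2$, $\Lambda_k=\mathbf{k}A_{[m_k,m_{k+1}]}/R^{l_k}$ ($A_{[a,b]}$: vertices $a,\dots,b$, arrows $\alpha_t\colon t\to t-1$; $R$ the arrow ideal), each of global dimension $n$ and admitting an $n\mathbb{Z}$-cluster tilting subcategory (so $n$ is even, $l_k\mid m_{k+1}-m_k$, $n=2(m_{k+1}-m_k)/l_k$). $\Lambda=\Lambda_1\ast\cdots\ast\Lambda_r$ is the gluing (quotient of $\mathbf{k}A_{[0,m]}$ by the ideal generated by the $R^{l_k}$ on the pieces and $\alpha_{m_k}\alpha_{m_k+1}$, $2\le k\le r$), and $\tilde\Lambda$ its self-gluing $\mathbf{k}\tilde A_m/\tilde I$ ($\tilde A_m$: vertices $1,\dots,m$, arrows $\alpha_t\colon t\to t-1$, $\alpha_1\colon1\to m$; vertex $0$ identified with $m$; $\tilde I$ generated by the image of the ideal of $\Lambda$ and $\alpha_m\alpha_1$). $\tilde M(i,i)$ is the simple at vertex $i$ (mod $m$). The resolution quiver of $\tilde\Lambda$ has the simples as vertices and an arrow $S_i\to S_j$ iff $S_j\cong\tau\operatorname{soc}P_i$, where $P_i$ is the projective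 cover of $S_i$ and $\tau$ the Auslander–Reiten translation; a simple is cyclic if it lies on an oriented cycle of the resolution quiver. *)

From mathcomp Require Import all_boot.
Set Implicit Arguments. Unset Strict Implicit. Unset Printing Implicit Defensive.

(* Combinatorial model of the self-glued Nakayama algebra
   tilde Lambda = k tilde A_m / tilde I.
   Data: r pieces, mk : nat -> nat gives m_1,...,m_{r+1} (mk k for 1<=k<=r+1),
   l : nat -> nat gives l_1,...,l_r.  m := mk r.+1.
   Vertices of tilde A_m are the residues 0..m-1 mod m (0 standing for m).
   The arrow alpha_t : t -> t-1 (and alpha_1 : 1 -> m) is t |-> prv t. *)

Section SelfGluedNakayama.
Variables (r : nat) (mk l : nat -> nat).

Definition mtot := mk r.+1.

Definition prv (t : nat) : nat := (t + mtot - 1) %% mtot.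

Definition walk (s j : nat) : nat := iter j prv s.

(* Generating (monomial) relations of tilde I, a path being given by its
   start vertex and its length:
   - R^{l_k} on piece k: every path of length l_k inside A_[m_k, m_{k+1}],
     i.e. starting at some s with m_k + l_k <= s <= m_{k+1};
   - alpha_{m_k} alpha_{m_k+1} (2 <= k <= r) and alpha_m alpha_1 (k = 1):
     the path of length 2 starting at m_k + 1. *)
Definition is_relation (s L : nat) : Prop :=
  exists k, 1 <= k <= r /\
    ((L = l k /\ exists s0, mk k + l k <= s0 <= mk k.+1 /\ s = s0 %% mtot)
     \/ (L = 2 /\ s = (mk k).+1 %% mtot)).

(* a path (s, L) is zero in tilde Lambda iff it contains a relation *)
Definition zero_path (s L : nat) : Prop :=
  exists j L', j + L' <= L /\ is_relation (walk s j) L'.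

Definition nonzero_path (s L : nat) : Prop := ~ zero_path s L.

(* soc P_i = S_v : P_i is uniserial with basis the nonzero paths starting at i;
   its socle is the simple at the end vertex of the longest nonzero path. *)
Definition socle_proj (i v : nat) : Prop :=
  exists L, nonzero_path i L /\ ~ nonzero_path i L.+1 /\ v = walk i L.

(* tau S_v = S_w : for a Nakayama algebra, a non-projective simple S_v
   (i.e. rad P_v <> 0, i.e. the arrow at v is a nonzero path) has
   tau S_v = rad P_v / rad^2 P_v = S_{target of the arrow at v}. *)
Definition tau_simple (v w : nat) : Prop :=
  nonzero_path v 1 /\ w = prv v.

(* arrow S_i -> S_j of the resolution quiver: S_j = tau soc P_i *)
Definition res_arrow (i j : nat) : Prop :=
  exists v, socle_proj i v /\ tau_simple v j.

Inductive res_path : nat -> nat -> Prop :=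
  | res_path1 i j : res_arrow i j -> res_path i j
  | res_pathS i j h : res_arrow i j -> res_path j h -> res_path i h.

Definition cyclic_simple (i : nat) : Prop := res_path (i %% mtot) (i %% mtot).

End SelfGluedNakayama.

(* The resolution quiver of a Nakayama algebra is the graph of the map x |-> x - c_x, where c_x
   is the Loewy length of P_x.  Here, if the arrow starting at x lies in the k-th piece at height
   h above m_k, then c_x = min (h + 1, l_k): either the relation R^{l_k} or the gluing relation at
   m_k is hit first.  So the map shifts x down by l_k inside its piece, or sends it to m_k - 1.
   On the vertices with x = m_k or x + 1 = m_k mod l_k it is therefore injective and stable, hence
   a permutation, and all of them lie on cycles.  From any other vertex one step either lands in
   that set or strictly decreases the vertex, so such a vertex never comes back to itself. *)

From mathcomp Require Import all_boot zify.
Set Implicit Arguments. Unset Strict Implicit. Unset Printing Implicit Defensive.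

Lemma eq_mod_pos d a b : 0 < a <= d -> 0 < b <= d -> a = b %[mod d] -> a = b.
Proof.
wlog ab : a b / a <= b => [hyp ha hb eab|ha hb /esym/eqP].
  by case: (leqP a b) => [|/ltnW] /hyp h; [apply: h | symmetry; apply: h].
rewrite eqn_mod_dvd // => /dvdn_leq; case: (posnP (b - a)); lia.
Qed.

Lemma small_dvdn_succ l a : 0 < a < l -> (l %| a) || (l %| a.+1) -> a.+1 = l.
Proof.
move=> /andP[a_gt0 a_lt] /orP[/(dvdn_leq a_gt0)|/(dvdn_leq (ltn0Sn a))]; lia.
Qed.

Section PeriodicPoints.
Variables (m : nat) (f : nat -> nat) (S : pred nat).
Hypothesis f_lt : forall x, x < m -> f x < m.
Hypothesis S_f : forall x, x < m -> S x -> S (f x).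

Lemma inj_in_periodic : {in [pred x | (x < m) && S x] &, injective f} ->
  forall x, x < m -> S x -> exists n, iter n.+1 f x = x.
Proof.
move=> f_inj x xm Sx.
pose g (y : 'I_m) : 'I_m := Ordinal (f_lt (ltn_ord y)).
pose T := [pred y : 'I_m | S (val y)].
have g_T : {homo g : y / y \in T} by move=> y; rewrite !inE; apply: S_f (ltn_ord y).
have g_inj : {in T &, injective g}.
  move=> y z yT zT /(congr1 val) /= gyz; apply: val_inj; apply: f_inj gyz.
    by rewrite inE ltn_ord.
  by rewrite inE ltn_ord.
have iter_g n (y : 'I_m) : val (iter n g y) = iter n f (val y).
  by elim: n => //= n ->.
pose x' : 'I_m := Ordinal xm.
have := iter_order_in g_T g_inj (_ : x' \in T); rewrite inE => /(_ Sx).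
have := order_gt0 g x'; case: (order g x') => // n _ /(congr1 val).
by rewrite iter_g; exists n.
Qed.

Lemma periodic_descent : (forall x, x < m -> ~~ S x -> S (f x) || (f x < x)) ->
  forall x n, x < m -> iter n.+1 f x = x -> S x.
Proof.
move=> f_desc x n xm fx; apply: contraT => nSx.
have iter_lt j : iter j f x < m by elim: j => //= j; apply: f_lt.
have : S (iter n.+1 f x) || (iter n.+1 f x < x).
  elim: n {fx} => [|n]; first exact: f_desc.
  rewrite [iter n.+2 f x]iterS; move: (iter _ f x) (iter_lt n.+1) => y ym.
  case/boolP: (S y) => [Sy _|nSy /= yx]; first by rewrite S_f.
  by case/orP: (f_desc _ ym nSy) => [->//|fy]; rewrite (ltn_trans fy yx) orbT.
by rewrite fx ltnn orbF (negbTE nSx).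
Qed.
End PeriodicPoints.

Section SelfGluedResolutionQuiver.
Variables (r : nat) (mk l : nat -> nat).
Hypothesis r_gt0 : 0 < r.
Hypothesis mk1 : mk 1 = 0.
Hypothesis mk_lt : forall k, 1 <= k <= r -> mk k < mk k.+1.
Hypothesis l_gt1 : forall k, 1 <= k <= r -> 1 < l k.
Hypothesis l_dvd : forall k, 1 <= k <= r -> l k %| mk k.+1 - mk k.

Local Notation m := (mtot r mk).
Local Notation prv := (prv r mk).
Local Notation walk := (walk r mk).
Local Notation zero_path := (zero_path r mk l).
Local Notation nonzero_path := (nonzero_path r mk l).

Lemma mk_ltn : {in [pred k | 0 < k <= r.+1] &, {homo mk : a b / a < b}}.
Proof.
apply: homo_ltn_in => [b a c|a b|a]; first exact: ltn_trans.
  by rewrite !inE => ? ? c; rewrite inE; lia.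
by rewrite !inE => /andP[a_gt0 _] /andP[_ a_le]; apply: mk_lt; lia.
Qed.

Lemma mk_leq a b : 0 < a -> a <= b <= r.+1 -> mk a <= mk b.
Proof.
move=> a_gt0 /andP[]; rewrite leq_eqVlt => /orP[/eqP->//|ab b_le].
by apply/ltnW/mk_ltn; rewrite // inE; lia.
Qed.

Lemma mtot_gt0 : 0 < m.
Proof. by rewrite -mk1; apply: mk_ltn; rewrite ?inE //= ltnS. Qed.

Definition in_piece (k t : nat) : bool := (1 <= k <= r) && (mk k < t <= mk k.+1).

Lemma in_piece_bounds k t : in_piece k t -> 0 < t <= m.
Proof.
case/andP=> kr kt; have : mk k.+1 <= m by apply: mk_leq; lia.
lia.
Qed.

Lemma in_piece_uniq k k' t : in_piece k t -> in_piece k' t -> k = k'.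
Proof.
move=> /andP[kr kt] /andP[k'r k't]; case: (ltngtP k k') => // kk'.
- have : mk k.+1 <= mk k' by apply: mk_leq; lia.
  lia.
- have : mk k'.+1 <= mk k by apply: mk_leq; lia.
  lia.
Qed.

Lemma in_piece_mod_inj k k' t t' :
  in_piece k t -> in_piece k' t' -> t = t' %[mod m] -> k = k' /\ t = t'.
Proof.
move=> kt k't' /(eq_mod_pos (in_piece_bounds kt) (in_piece_bounds k't')) tt'.
by split=> //; apply: in_piece_uniq kt _; rewrite tt'.
Qed.

Lemma in_piece_top k : 1 <= k <= r -> in_piece k (mk k.+1).
Proof. by move=> kr; rewrite /in_piece kr mk_lt // leqnn. Qed.

Lemma in_piece_bottom k : 1 <= k <= r -> in_piece k (mk k).+1.
Proof. by move=> kr; rewrite /in_piece kr ltnSn mk_lt. Qed.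

Lemma l_le_piece k : 1 <= k <= r -> l k <= mk k.+1 - mk k.
Proof. by move=> kr; apply: dvdn_leq (l_dvd kr); rewrite subn_gt0 mk_lt. Qed.

Lemma mk_mod_top k : 1 <= k <= r -> exists2 j, 1 <= j <= r & mk k = mk j.+1 %% m.
Proof.
move=> kr; have [k1|k_gt1] := eqVneq k 1.
  by exists r; [rewrite r_gt0 /= | rewrite k1 mk1 modnn].
exists k.-1; first lia.
rewrite prednK ?modn_small; [by [] | | lia].
by apply: mk_ltn; rewrite ?inE; lia.
Qed.

Definition piece (t : nat) : nat := (find (fun j => t <= mk j.+2) (iota 0 r)).+1.

Lemma piece_spec t : 0 < t <= m -> in_piece (piece t) t.
Proof.
move=> /andP[t_gt0 tm]; rewrite /in_piece /piece.
set P := fun j => t <= mk j.+2.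
have hasP : has P (iota 0 r).
  by apply/hasP; exists r.-1; rewrite ?mem_iota /P ?prednK //; lia.
have ltr : find P (iota 0 r) < r by rewrite -[X in _ < X](size_iota 0 r) -has_find.
move: ltr (@before_find _ 0 P (iota 0 r)) (nth_find 0 hasP).
case: (find P _) => [|j] ltr before; rewrite nth_iota // add0n /P => ->.
  by rewrite mk1 t_gt0 andbT; lia.
have := before j (ltnSn j); rewrite nth_iota /P; last lia.
by rewrite add0n => /negbT; rewrite -ltnNge => ->; lia.
Qed.

Lemma piece_eq k t : in_piece k t -> piece t = k.
Proof. by move=> kt; apply: in_piece_uniq (kt); apply/piece_spec/in_piece_bounds/kt. Qed.

(* Vertex [x < m] is the source of the arrow alpha_t with [t = arrow_index x] in (0, m]; this
   arrow lies in the piece [k] with [mk k < t <= mk k.+1]. *)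
Definition arrow_index (x : nat) : nat := if x == 0 then m else x.

Lemma arrow_index_mod t : 0 < t <= m -> arrow_index (t %% m) = t.
Proof.
move=> /andP[t_gt0]; rewrite leq_eqVlt /arrow_index => /orP[/eqP->|tm].
  by rewrite modnn.
by rewrite modn_small // gtn_eqF.
Qed.

Lemma vertex_piece x : x < m -> exists k t, in_piece k t /\ x = t %% m.
Proof.
move=> xm; have xt : 0 < arrow_index x <= m.
  by rewrite /arrow_index; case: eqP; lia.
exists (piece (arrow_index x)), (arrow_index x); split; first exact: piece_spec.
by rewrite /arrow_index; case: eqP => [->|_]; rewrite ?modnn ?modn_small.
Qed.

Lemma prv_mod a : prv (a %% m) = prv a.
Proof. by rewrite /prv -!addnBA ?mtot_gt0 // modnDml. Qed.

Lemma prvS a : prv a.+1 = a %% m.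
Proof. by rewrite /prv addSn subn1 /= modnDr. Qed.

Lemma prvK a : (prv a).+1 = a %[mod m].
Proof.
by rewrite /prv -addnBA ?mtot_gt0 // -addn1 modnDml -addnA subnK ?mtot_gt0 ?modnDr.
Qed.

Lemma prv_inj_mod a b : prv a = prv b -> a = b %[mod m].
Proof. by move=> e; rewrite -prvK e prvK. Qed.

Lemma walk_mod s j : j <= s -> walk (s %% m) j = (s - j) %% m.
Proof.
elim: j => [|j IH] js; first by rewrite subn0.
rewrite /walk iterS -/(walk _ j) IH 1?ltnW // prv_mod.
by rewrite -[s - j](subnSK js) prvS.
Qed.

Lemma walk_lt x j : 0 < j -> walk x j < m.
Proof. by case: j => // j _; rewrite /walk iterS ltn_pmod ?mtot_gt0. Qed.

Lemma zero_pathW s L L' : zero_path s L -> L <= L' -> zero_path s L'.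
Proof. by case=> j [L0 [jL rel]] LL'; exists j, L0; split=> //; apply: leq_trans LL'. Qed.

Lemma is_relation_gt1 s L : is_relation r mk l s L -> 1 < L.
Proof. by case=> k [kr [[-> _]|[-> _]]]; rewrite ?l_gt1. Qed.

Lemma nonzero_path1 v : nonzero_path v 1.
Proof. by case=> j [L [jL /is_relation_gt1]]; lia. Qed.

Lemma zero_path_piece k t : in_piece k t -> zero_path (t %% m) (minn (t - mk k) (l k).-1).+1.
Proof.
case/andP=> kr kt; have l_gt1k := l_gt1 kr.
case: (leqP (l k) (t - mk k)) => lt.
- exists 0, (l k); split; first lia.
  by exists k; split=> //; left; split=> //; exists t; split=> //; lia.
- exists (t - mk k).-1, 2; split; first lia.
  exists k; split=> //; right; split=> //.
  by rewrite walk_mod; [congr (_ %% _) | ]; lia.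
Qed.

Lemma nonzero_path_piece k t L :
  in_piece k t -> L <= minn (t - mk k) (l k).-1 -> nonzero_path (t %% m) L.
Proof.
move=> kt Lt [j [L' [jL rel]]]; have L'_gt1 := is_relation_gt1 rel.
have /andP[kr _] := kt.
have kj : in_piece k (t - j) by move: kt; rewrite /in_piece kr; lia.
rewrite walk_mod in rel; last lia.
case: rel => k' [k'r [[eL' [s [s_k' ts]]] | [eL' ts]]].
- have k's : in_piece k' s by rewrite /in_piece k'r; have := l_gt1 k'r; lia.
  by case: (in_piece_mod_inj kj k's ts) => kk'; subst; lia.
- by case: (in_piece_mod_inj kj (in_piece_bottom k'r) ts) => kk'; subst; lia.
Qed.

Definition kupisch (x : nat) : nat :=
  let t := arrow_index x in (minn (t - mk (piece t)) (l (piece t)).-1).+1.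

Lemma kupisch_piece k t : in_piece k t -> kupisch (t %% m) = (minn (t - mk k) (l k).-1).+1.
Proof. by move=> kt; rewrite /kupisch arrow_index_mod ?(piece_eq kt) ?(in_piece_bounds kt). Qed.

Lemma nonzero_path_kupisch x L : x < m -> nonzero_path x L <-> L < kupisch x.
Proof.
move=> /vertex_piece[k [t [kt ->]]]; rewrite (kupisch_piece kt) ltnS.
split=> [nzL|]; last exact: nonzero_path_piece.
by rewrite leqNgt; apply/negP => ltL; apply/nzL/(zero_pathW (zero_path_piece kt)).
Qed.

Definition res_map (x : nat) : nat := walk x (kupisch x).

Lemma res_map_lt x : res_map x < m.
Proof. exact: walk_lt. Qed.

Lemma res_arrowE x y : x < m -> res_arrow r mk l x y <-> y = res_map x.
Proof.
move=> xm; have c_gt0 : 0 < kupisch x by [].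
split=> [[v [[L [nzL [zL ->]]] [_ ->]]] | ->].
  have cL : kupisch x = L.+1.
    by move: nzL zL; rewrite !nonzero_path_kupisch //; lia.
  by rewrite /res_map cL.
exists (walk x (kupisch x).-1); split; last first.
  by split; [apply: nonzero_path1 | rewrite /res_map -[in LHS](prednK c_gt0)].
exists (kupisch x).-1; rewrite !nonzero_path_kupisch // prednK // ltnn leqnn.
by split.
Qed.

Lemma res_path_iter x y : x < m -> res_path r mk l x y <-> exists n, y = iter n.+1 res_map x.
Proof.
move=> xm; split.
  move=> p; elim: p xm => {x y} [x y xy | x y z xy _ IH] xm.
    by exists 0; apply/(res_arrowE _ xm).
  move/(res_arrowE _ xm): xy => ey; have ym : y < m by rewrite ey res_map_lt.
  by have [n ->] := IH ym; exists n.+1; rewrite [in RHS]iterSr -ey.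
case=> n ->; elim: n x xm => [|n IH] x xm; first exact/res_path1/res_arrowE.
rewrite iterSr; apply: res_pathS (IH _ (res_map_lt x)); exact/res_arrowE.
Qed.

Lemma res_map_piece k t : in_piece k t ->
  res_map (t %% m) = if l k <= t - mk k then t - l k else prv (mk k).
Proof.
move=> kt; have /andP[kr t_in] := kt; have l_gt1k := l_gt1 kr.
have tm := in_piece_bounds kt.
rewrite /res_map (kupisch_piece kt); case: leqP => lt.
  rewrite (minn_idPr _) ?prednK; [ | lia | lia].
  by rewrite walk_mod ?modn_small; lia.
rewrite (minn_idPl _); last lia.
by rewrite /walk iterS -/(walk _ _) walk_mod ?subKn ?prv_mod; lia.
Qed.

Definition cyclic_cond (x : nat) : bool :=
  let t := arrow_index x in let k := piece t in (l k %| t - mk k) || (l k %| t.+1 - mk k).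

Lemma cyclic_cond_piece k t :
  in_piece k t -> cyclic_cond (t %% m) = (l k %| t - mk k) || (l k %| t.+1 - mk k).
Proof. by move=> kt; rewrite /cyclic_cond arrow_index_mod ?(piece_eq kt) ?(in_piece_bounds kt). Qed.

Lemma cyclic_cond_top j : 1 <= j <= r -> cyclic_cond (mk j.+1 %% m).
Proof. by move=> jr; rewrite (cyclic_cond_piece (in_piece_top jr)) l_dvd. Qed.

Lemma cyclic_cond_mk k : 1 <= k <= r -> cyclic_cond (mk k).
Proof. by case/mk_mod_top=> j jr ->; apply: cyclic_cond_top. Qed.

Lemma cyclic_cond_prv_mk k : 1 <= k <= r -> cyclic_cond (prv (mk k)).
Proof.
case/mk_mod_top=> j jr ->; rewrite prv_mod.
have l_le := l_le_piece jr; have l_gt1j := l_gt1 jr.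
have jt : in_piece j (mk j.+1).-1 by rewrite /in_piece jr; lia.
have -> : prv (mk j.+1) = (mk j.+1).-1 %% m by rewrite -prvS prednK //; lia.
by rewrite (cyclic_cond_piece jt) prednK ?l_dvd ?orbT //; lia.
Qed.

Lemma in_piece_shift k t :
  in_piece k t -> l k <= t - mk k -> in_piece k (t - l k).+1 && ((t - l k).+1 < mk k.+1).
Proof. by case/andP=> kr kt lt; rewrite /in_piece kr; have := l_gt1 kr; lia. Qed.

Lemma cyclic_cond_res_map x : x < m -> cyclic_cond x -> cyclic_cond (res_map x).
Proof.
move=> /vertex_piece[k [t [kt ->]]]; rewrite (res_map_piece kt) (cyclic_cond_piece kt).
have /andP[kr _] := kt; have l_gt1k := l_gt1 kr.
case: leqP => lt cond; last exact: cyclic_cond_prv_mk.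
have [-> | tk] := eqVneq (t - l k) (mk k); first exact: cyclic_cond_mk.
have kt' : in_piece k (t - l k) by move: kt; rewrite /in_piece kr; lia.
rewrite -[t - l k](@modn_small _ m); last by have := in_piece_bounds kt; lia.
rewrite (cyclic_cond_piece kt'); case/orP: cond => dv; apply/orP; [left | right].
  by rewrite subnAC dvdn_sub.
have -> : (t - l k).+1 - mk k = t.+1 - mk k - l k by lia.
by rewrite dvdn_sub.
Qed.

Lemma res_map_descent x :
  x < m -> ~~ cyclic_cond x -> cyclic_cond (res_map x) || (res_map x < x).
Proof.
move=> /vertex_piece[k [t [kt ->]]]; rewrite (res_map_piece kt) (cyclic_cond_piece kt).
have /andP[kr /andP[kt1 kt2]] := kt.
have [-> | t_top] := eqVneq t (mk k.+1); first by rewrite l_dvd.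
rewrite modn_small; last by have := in_piece_bounds (in_piece_top kr); lia.
case: (leqP (l k) (t - mk k)) => _ _; first by apply/orP; right; have := l_gt1 kr; lia.
by rewrite cyclic_cond_prv_mk.
Qed.

Lemma cyclic_cond_drop k t : in_piece k t -> t - mk k < l k ->
  (l k %| t - mk k) || (l k %| t.+1 - mk k) -> t.+1 = mk k + l k.
Proof.
move=> /andP[_ /andP[kt _]] lt dv.
have : (t - mk k).+1 = l k.
  by apply: small_dvdn_succ; [lia | rewrite -subSn ?(ltnW kt)].
lia.
Qed.

Lemma prv_mk_inj k k' : 1 <= k <= r -> 1 <= k' <= r -> prv (mk k) = prv (mk k') -> k = k'.
Proof.
move=> kr k'r /prv_inj_mod e.
have e1 : (mk k).+1 = (mk k').+1 %[mod m].
  by rewrite -[(mk k).+1]addn1 -[(mk k').+1]addn1 -modnDml e modnDml.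
by case: (in_piece_mod_inj (in_piece_bottom kr) (in_piece_bottom k'r) e1).
Qed.

Lemma shift_neq_prv_mk k t k' :
  in_piece k t -> l k <= t - mk k -> 1 <= k' <= r -> t - l k != prv (mk k').
Proof.
move=> kt lt k'r; apply/eqP => /(congr1 (fun y => y.+1 %% m)); rewrite prvK.
have /andP[kt' top] := in_piece_shift kt lt.
case: (mk_mod_top k'r) => j jr ->; rewrite modn_mod => e.
by case: (in_piece_mod_inj kt' (in_piece_top jr) e) => kj; subst; lia.
Qed.

Lemma res_map_inj : {in [pred x | (x < m) && cyclic_cond x] &, injective res_map}.
Proof.
move=> x x'; rewrite !inE.
move=> /andP[/vertex_piece[k [t [kt ->]]] cx] /andP[/vertex_piece[k' [t' [k't' ->]]] cx'].
move: cx cx'; rewrite (res_map_piece kt) (res_map_piece k't').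
rewrite (cyclic_cond_piece kt) (cyclic_cond_piece k't').
have /andP[kr _] := kt; have /andP[k'r _] := k't'.
case: (leqP (l k) (t - mk k)) => lt; case: (leqP (l k') (t' - mk k')) => lt' cx cx' e.
- have /andP[kt1 _] := in_piece_shift kt lt; have /andP[k't1 _] := in_piece_shift k't' lt'.
  rewrite e in kt1; have kk' := in_piece_uniq kt1 k't1; subst k'.
  by congr (_ %% _); clear -e lt lt'; lia.
- by case/eqP: (shift_neq_prv_mk kt lt k'r).
- by case/eqP: (shift_neq_prv_mk k't' lt' kr).
- have kk' := prv_mk_inj kr k'r e; subst k'.
  have := cyclic_cond_drop k't' lt' cx'; rewrite -(cyclic_cond_drop kt lt cx).
  by move/succn_inj ->.
Qed.

Lemma cyclic_simpleE i : i < m -> cyclic_simple r mk l i <-> cyclic_cond i.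
Proof.
have res_map_lt' x : x < m -> res_map x < m by move=> _; apply: res_map_lt.
move=> im; rewrite /cyclic_simple modn_small // res_path_iter //; split.
  case=> n /esym; apply: periodic_descent im => //.
  - exact: cyclic_cond_res_map.
  - exact: res_map_descent.
move=> ci; have [n e] := inj_in_periodic res_map_lt' cyclic_cond_res_map res_map_inj im ci.
by exists n.
Qed.

Lemma cyclic_condE k i : 1 <= k <= r -> mk k <= i < mk k.+1 ->
  cyclic_cond i = (i == mk k %[mod l k]) || (i.+1 == mk k %[mod l k]).
Proof.
move=> kr /andP[ki ik]; have [-> | ik'] := eqVneq i (mk k).
  by rewrite cyclic_cond_mk // eqxx.
have kt : in_piece k i by rewrite /in_piece kr; lia.
rewrite -[i in LHS](@modn_small _ m); last by have := in_piece_bounds (in_piece_top kr); lia.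
by rewrite (cyclic_cond_piece kt) !eqn_mod_dvd //; lia.
Qed.

Lemma cyclic_simple_piece k i : 1 <= k <= r -> mk k <= i < mk k.+1 ->
  cyclic_simple r mk l i <-> i = mk k %[mod l k] \/ i.+1 = mk k %[mod l k].
Proof.
move=> kr ki; have im : i < m by have := in_piece_bounds (in_piece_top kr); lia.
rewrite cyclic_simpleE // (cyclic_condE kr ki).
by split=> [/orP[] /eqP | [] ->]; rewrite ?eqxx ?orbT; auto.
Qed.
End SelfGluedResolutionQuiver.

Theorem lemma5p8 (n r : nat) (mk l : nat -> nat) :
  2 <= n ->
  1 <= r ->
  mk 1 = 0 ->
  (forall k, 1 <= k <= r -> mk k < mk k.+1) ->
  (forall k, 1 <= k <= r ->
     [/\ 2 <= l k, l k %| mk k.+1 - mk k & n = 2 * ((mk k.+1 - mk k) %/ l k)]) ->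
  forall k i, 1 <= k <= r -> mk k <= i < mk k.+1 ->
    (cyclic_simple r mk l i <->
       (i = mk k %[mod l k] \/ i.+1 = mk k %[mod l k])).
Proof.
move=> _ r_gt0 mk1 mk_lt hl k i kr ki.
by apply: (cyclic_simple_piece r_gt0 mk1 mk_lt _ _ kr ki) => k' /hl[].
Qed.
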